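(* Let $\phi_*\in(0,\pi/2)$, $R\ge r=1$, and consider the billiard map on $Q(\phi_*,R)$. Let $x\in M_r$ with $n_1=0$ (exactly one reflection on $\Gamma_R$ between $x_0$ and $x_2$), and let $\tau_0=|p(x_0)p(x_1)|$, $\tau_1=|p(x_1)p(x_2)|$. If $$\frac{2}{d_1}<\frac1{\tau_0}+\frac1{\tau_1},$$ then the orbit segment $(x_0,x_1,x_2)$ is negatively defocusing.
   Context: Setting: $r=1$, $Q(\phi_*,R)=D(O_r,r)\cap D(O_R,R)$ with $|O_rO_R|=\sqrt{R^2-r^2\sin^2\phi_*}-r\cos\phi_*$; its boundary consists of $\Gamma_r$ (a major arc of $\partial D(O_r,r)$, position angles $[\phi_*,2\pi-\phi_*]$) and $\Gamma_R\subset\partial D(O_R,R)$. Phase space $M=M_r\sqcup M_R$, coordinates $(\phi,\theta)$ with $\theta\in(0,\pi)$ the angle from the positive tangent direction; $p(x)$ the base point; $F$ the billiard map. $M_r^{out}=M_r\cap F^{-1}(M_R)$, $M_R^{out}=M_R\cap F^{-1}(M_r)$. For $x\in M_r$: $x_0=F^{n_0}x$ with $n_0=\inf\{n\ge0:F^nx\in M_r^{out}\}$, $x_1=Fx_0$, $n_1=\inf\{n\ge0:F^nx_1\in M_R^{out}\}$, $x_2=F^{n_1+1}x_1$; $d_0=r\sin\theta(x_0)$, $d_1=R\sin\theta(x_1)$, $d_2=r\sin\theta(x_2)$. Derivative: $D_xF=\frac1{d(Fx)}\begin{bmatrix}\tau-d(x)&\tau\\ \tau-d(x)-d(Fx)&\tau-d(Fx)\end{bmatrix}$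 with $d(x)=\rho\sin\theta$ ($\rho$ the radius of the arc of $p(x)$), $\tau=|p(x)p(Fx)|$. A segment $(F^kx)_{m\le k\le n}$ is negatively defocusing if all four entries of $D_{F^mx}F^{n-m}$ in $(\phi,\theta)$ coordinates are negative. *)

From Stdlib Require Import Reals Lra List.
Open Scope R_scope.
Import ListNotations.

(** * The table Q(phi_star, R) with r = 1.
    O_r = (0,0); O_R = (-|O_rO_R|, 0), so that the two circles meet at the
    corners (cos phi_star, +- sin phi_star).  Gamma_r is the arc of the unit circle
    with position angles in [phi_star, 2 pi - phi_star] (points with abscissa
    <= cos phi_star), Gamma_R the arc of the big circle with abscissa >= cos phi_star. *)

Definition pt := (R * R)%type.

Definition dist (P Q : pt) : R :=
  sqrt ((fst P - fst Q) ^ 2 + (snd P - snd Q) ^ 2).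

Definition dOO (phis RR : R) : R := sqrt (RR ^ 2 - (sin phis) ^ 2) - cos phis.

Definition O_r : pt := (0, 0).
Definition O_R (phis RR : R) : pt := (- dOO phis RR, 0).

Inductive side := Sr | SR.

Record phase := mkPhase { side_of : side; phi : R; theta : R }.

Definition rad (RR : R) (s : side) : R := match s with Sr => 1 | SR => RR end.
Definition center (phis RR : R) (s : side) : pt :=
  match s with Sr => O_r | SR => O_R phis RR end.

Definition base (phis RR : R) (x : phase) : pt :=
  let C := center phis RR (side_of x) in
  let rho := rad RR (side_of x) in
  (fst C + rho * cos (phi x), snd C + rho * sin (phi x)).

Definition InM (phis RR : R) (x : phase) : Prop :=
  0 < theta x < PI /\
  match side_of x with
  | Sr => phis <= phi x <= 2 * PI - phis
  | SR => - PI < phi x <= PI /\ cos phis <= fst (base phis RR x)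
  end.

Definition InMr phis RR x := InM phis RR x /\ side_of x = Sr.
Definition InMR phis RR x := InM phis RR x /\ side_of x = SR.

(** outgoing unit velocity: angle theta from the positive (counterclockwise)
    tangent direction, pointing into the table *)
Definition vel (x : phase) : pt :=
  (cos (theta x) * (- sin (phi x)) + sin (theta x) * (- cos (phi x)),
   cos (theta x) * cos (phi x) + sin (theta x) * (- sin (phi x))).

Definition inQint (phis RR : R) (P : pt) : Prop :=
  dist P O_r < 1 /\ dist P (O_R phis RR) < RR.

Definition corner (phis : R) (P : pt) : Prop :=
  P = (cos phis, sin phis) \/ P = (cos phis, - sin phis).

Definition dot (u v : pt) : R := fst u * fst v + snd u * snd v.

(** The billiard map as a relation: [Fstep x y] means F x = y. *)
Definition Fstep (phis RR : R) (x y : phase) : Prop :=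
  InM phis RR x /\ InM phis RR y /\
  exists t : R, 0 < t /\
    base phis RR y = (fst (base phis RR x) + t * fst (vel x),
                      snd (base phis RR x) + t * snd (vel x)) /\
    (forall s, 0 < s < t ->
       inQint phis RR (fst (base phis RR x) + s * fst (vel x),
                       snd (base phis RR x) + s * snd (vel x))) /\
    ~ corner phis (base phis RR y) /\
    (let n := (cos (phi y), sin (phi y)) in
     let u := vel x in
     vel y = (fst u - 2 * dot u n * fst n, snd u - 2 * dot u n * snd n)).

Inductive Fiter (phis RR : R) : nat -> phase -> phase -> Prop :=
| Fiter0 x : Fiter phis RR 0 x x
| FiterS n x y z : Fstep phis RR x y -> Fiter phis RR n y z ->
                   Fiter phis RR (S n) x z.

Definition InMr_out phis RR x :=
  InMr phis RR x /\ exists y, Fstep phis RR x y /\ side_of y = SR.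
Definition InMR_out phis RR x :=
  InMR phis RR x /\ exists y, Fstep phis RR x y /\ side_of y = Sr.

Definition dd (RR : R) (x : phase) : R := rad RR (side_of x) * sin (theta x).
Definition tau (phis RR : R) (x y : phase) : R := dist (base phis RR x) (base phis RR y).

Record mat2 := Mat2 { m11 : R; m12 : R; m21 : R; m22 : R }.

Definition mmul (A B : mat2) : mat2 :=
  Mat2 (m11 A * m11 B + m12 A * m21 B) (m11 A * m12 B + m12 A * m22 B)
       (m21 A * m11 B + m22 A * m21 B) (m21 A * m12 B + m22 A * m22 B).

(** D_x F in (phi, theta) coordinates, for y = F x (formula from the context) *)
Definition DF (phis RR : R) (x y : phase) : mat2 :=
  let t := tau phis RR x y in
  let dx := dd RR x in
  let dy := dd RR y in
  Mat2 ((t - dx) / dy) (t / dy) ((t - dx - dy) / dy) ((t - dy) / dy).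

Fixpoint DFseg (phis RR : R) (x : phase) (l : list phase) : mat2 :=
  match l with
  | nil => Mat2 1 0 0 1
  | y :: l' => mmul (DFseg phis RR y l') (DF phis RR x y)
  end.

Definition negative_mat (A : mat2) : Prop :=
  m11 A < 0 /\ m12 A < 0 /\ m21 A < 0 /\ m22 A < 0.

Definition neg_defocusing (phis RR : R) (x : phase) (l : list phase) : Prop :=
  negative_mat (DFseg phis RR x l).

From Pilot Require Import Defs.
From Stdlib Require Import Reals List Lra Psatz.
Open Scope R_scope.

(* With a = tau0, b = tau1, the product D_{x1}F * D_{x0}F has the
   four entries  f(a-d0,b), f(a,b), f(a-d0,b-d2), f(a,b-d2)  divided by d1 d2,
   where f(s,g) = 2 s g - d1 (s + g) is the focusing form.  The hypothesis says
   f(a,b) < 0, and f stays negative when a, b decrease to s <= a, g <= b as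
   long as s + g > 0 (because (2s-d1)(2g-d1) = 2 f(s,g) + d1^2).

   The only geometric input is the positivity of the margin
   (a - d0) + (b - d2).  Tracking the unit velocities u0, u1 around the bounce
   point p1 on the big circle, with normal n1, one finds
     a - d0 = u0.p1,   b - d2 = - u1.p1,   u0 - u1 = 2 sin(theta1) n1,
   so the margin equals 2 sin(theta1) (n1.p1) = 2 sin(theta1) (R - |O_rO_R| cos phi1),
   which is positive since 0 <= |O_rO_R| < R. *)

(* The focusing form: its sign decides the sign of each entry of the product
   of two consecutive derivative matrices. *)
Definition focal_form (d s g : R) : R := 2 * s * g - d * (s + g).

Lemma focal_form_neg_decreasing (d a b s g : R) :
  0 < d -> s <= a -> g <= b -> 0 < s + g ->
  focal_form d a b < 0 -> focal_form d s g < 0.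
Proof.
  unfold focal_form; intros Hd Hs Hg Hsum Hab.
  (* in the variables u = 2s-d, v = 2g-d the claim reads u v < d^2 *)
  assert (Hprod : (2*a - d) * (2*b - d) < d * d) by nra.
  destruct (Rlt_or_le ((2*s - d) * (2*g - d)) (d * d)) as [Huv | Huv]; [nra |].
  exfalso.
  destruct (Rle_or_lt 0 (2*s - d)) as [Hu | Hu].
  - (* u, v >= 0: then u v <= U V < d^2 *)
    assert (Hv : 0 <= 2*g - d) by nra.
    assert ((2*s - d) * (2*g - d) <= (2*a - d) * (2*b - d)) by nra.
    lra.
  - (* u, v < 0 with u + v > -2d: then u v < d^2 by AM-GM *)
    assert (Hv : 2*g - d < 0) by nra.
    nra.
Qed.

Definition jac (t dx dy : R) : mat2 :=
  Mat2 ((t - dx) / dy) (t / dy) ((t - dx - dy) / dy) ((t - dy) / dy).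

Lemma DF_jac (phis RR : R) (x y : phase) :
  DF phis RR x y = jac (tau phis RR x y) (dd RR x) (dd RR y).
Proof. reflexivity. Qed.

Lemma jac_product (a b d0 d1 d2 : R) : d1 <> 0 -> d2 <> 0 ->
  mmul (jac b d1 d2) (jac a d0 d1) =
  Mat2 (focal_form d1 (a - d0) b / (d1 * d2))
       (focal_form d1 a b / (d1 * d2))
       (focal_form d1 (a - d0) (b - d2) / (d1 * d2))
       (focal_form d1 a (b - d2) / (d1 * d2)).
Proof.
  intros H1 H2; unfold mmul, jac, focal_form; simpl.
  f_equal; field; auto.
Qed.

Lemma jac_product_negative (a b d0 d1 d2 : R) :
  0 < a -> 0 < b -> 0 < d0 -> 0 < d1 -> 0 < d2 ->
  2 / d1 < 1 / a + 1 / b ->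
  0 < (a - d0) + (b - d2) ->
  negative_mat (mmul (jac b d1 d2) (jac a d0 d1)).
Proof.
  intros Ha Hb Hd0 Hd1 Hd2 Hmirror Hmargin.
  assert (Hf : focal_form d1 a b < 0).
  { unfold focal_form.
    apply Rmult_lt_compat_r with (r := a * b * d1) in Hmirror;
      [| apply Rmult_lt_0_compat; [apply Rmult_lt_0_compat |]; lra].
    replace (2 / d1 * (a * b * d1)) with (2 * a * b) in Hmirror by (field; lra).
    replace ((1 / a + 1 / b) * (a * b * d1)) with (d1 * (a + b)) in Hmirror
      by (field; lra).
    lra. }
  assert (Hden : 0 < d1 * d2) by (apply Rmult_lt_0_compat; lra).
  rewrite jac_product by lra.
  unfold negative_mat; simpl.
  repeat split; apply Rdiv_neg_pos; try exact Hden; try exact Hf;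
    apply focal_form_neg_decreasing with a b; lra.
Qed.

Lemma mmul_id_l (A : mat2) : mmul (Mat2 1 0 0 1) A = A.
Proof. destruct A; unfold mmul; simpl; f_equal; ring. Qed.

(* outward unit normal at the base point of x *)
Definition nrm (x : phase) : pt := (cos (phi x), sin (phi x)).

Lemma cos_sin_sq (f : R) : cos f ^ 2 + sin f ^ 2 = 1.
Proof. pose proof (sin2_cos2 f) as H; unfold Rsqr in H; lra. Qed.

Lemma nrm_unit (x : phase) : dot (nrm x) (nrm x) = 1.
Proof. unfold dot, nrm; simpl; rewrite <- (cos_sin_sq (phi x)); ring. Qed.

Lemma vel_unit (x : phase) : dot (vel x) (vel x) = 1.
Proof.
  unfold dot, vel; simpl.
  transitivity ((cos (theta x) ^ 2 + sin (theta x) ^ 2) *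
                (cos (phi x) ^ 2 + sin (phi x) ^ 2)); [ring |].
  rewrite !cos_sin_sq; ring.
Qed.

(* theta is the angle with the tangent, so the normal component of the
   outgoing velocity is - sin theta. *)
Lemma vel_nrm (x : phase) : dot (vel x) (nrm x) = - sin (theta x).
Proof.
  unfold dot, vel, nrm; simpl.
  transitivity (- sin (theta x) * (cos (phi x) ^ 2 + sin (phi x) ^ 2)); [ring |].
  rewrite cos_sin_sq; ring.
Qed.

Lemma sin_theta_pos (phis RR : R) (x : phase) :
  InM phis RR x -> 0 < sin (theta x).
Proof. intros [[H0 H1] _]; apply sin_gt_0; assumption. Qed.

Lemma dd_pos (phis RR : R) (x : phase) :
  0 < RR -> InM phis RR x -> 0 < dd RR x.
Proof.
  intros HR Hx; pose proof (sin_theta_pos _ _ _ Hx).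
  unfold dd; destruct (side_of x); simpl; nra.
Qed.

Lemma Fstep_flight (phis RR : R) (x y : phase) :
  Fstep phis RR x y ->
  0 < tau phis RR x y /\
  base phis RR y = (fst (base phis RR x) + tau phis RR x y * fst (vel x),
                    snd (base phis RR x) + tau phis RR x y * snd (vel x)).
Proof.
  intros (_ & _ & t & Ht & Hy & _).
  assert (Htau : tau phis RR x y = t).
  { unfold tau, Defs.dist; rewrite Hy; cbn [fst snd].
    replace ((fst (base phis RR x) - (fst (base phis RR x) + t * fst (vel x))) ^ 2 +
             (snd (base phis RR x) - (snd (base phis RR x) + t * snd (vel x))) ^ 2)
      with (t ^ 2 * dot (vel x) (vel x)) by (unfold dot; ring).
    rewrite vel_unit, Rmult_1_r; apply sqrt_pow2; lra. }
  rewrite Htau; auto.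
Qed.

(* Elastic reflection flips the normal component of the velocity, so the
   incoming velocity has normal component sin theta at the landing point. *)
Lemma reflection_normal (phis RR : R) (x y : phase) :
  Fstep phis RR x y -> dot (vel x) (nrm y) = sin (theta y).
Proof.
  intros (_ & _ & _ & _ & _ & _ & _ & Hv); simpl in Hv.
  pose proof (vel_nrm y) as Hout; pose proof (nrm_unit y) as Hn.
  assert (Hflip : dot (vel y) (nrm y) =
                  dot (vel x) (nrm y) * (1 - 2 * dot (nrm y) (nrm y)))
    by (rewrite Hv; unfold dot, nrm; simpl; ring).
  rewrite Hn in Hflip; lra.
Qed.

Lemma reflection_jump (phis RR : R) (x y : phase) (P : pt) :
  Fstep phis RR x y ->
  dot (vel x) P - dot (vel y) P = 2 * sin (theta y) * dot (nrm y) P.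
Proof.
  intros Hxy; pose proof (reflection_normal _ _ _ _ Hxy) as Hin.
  destruct Hxy as (_ & _ & _ & _ & _ & _ & _ & Hv); simpl in Hv.
  rewrite <- Hin, Hv; unfold dot, nrm; simpl; ring.
Qed.

Lemma base_unit_circle (phis RR : R) (x : phase) :
  side_of x = Sr -> base phis RR x = nrm x.
Proof.
  intros Hs; unfold base, nrm; rewrite Hs; simpl; f_equal; ring.
Qed.

Lemma leave_unit_circle (phis RR : R) (x y : phase) :
  side_of x = Sr -> Fstep phis RR x y ->
  tau phis RR x y - dd RR x = dot (vel x) (base phis RR y).
Proof.
  intros Hs Hxy; destruct (Fstep_flight _ _ _ _ Hxy) as [_ Hy].
  pose proof (vel_nrm x) as Hn; pose proof (vel_unit x) as Hu.
  rewrite (base_unit_circle phis RR x Hs) in Hy.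
  assert (Hproj : dot (vel x) (base phis RR y) =
                  dot (vel x) (nrm x) + tau phis RR x y * dot (vel x) (vel x))
    by (rewrite Hy; unfold dot; simpl; ring).
  unfold dd; rewrite Hs, Hproj, Hn, Hu; simpl; ring.
Qed.

Lemma arrive_unit_circle (phis RR : R) (x y : phase) :
  side_of y = Sr -> Fstep phis RR x y ->
  tau phis RR x y - dd RR y = - dot (vel x) (base phis RR x).
Proof.
  intros Hs Hxy; destruct (Fstep_flight _ _ _ _ Hxy) as [_ Hy].
  pose proof (reflection_normal _ _ _ _ Hxy) as Hin.
  pose proof (vel_unit x) as Hu.
  rewrite (base_unit_circle phis RR y Hs) in Hy.
  assert (Hproj : dot (vel x) (nrm y) =
                  dot (vel x) (base phis RR x) + tau phis RR x y * dot (vel x) (vel x))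
    by (rewrite Hy; unfold dot; simpl; ring).
  rewrite Hin, Hu in Hproj.
  unfold dd; rewrite Hs; simpl; lra.
Qed.

Lemma dOO_bounds (phis RR : R) :
  0 < phis < PI / 2 -> 1 <= RR -> 0 <= dOO phis RR < RR.
Proof.
  intros Hphi HR; unfold dOO.
  pose proof PI_RGT_0.
  assert (Hc : 0 < cos phis) by (apply cos_gt_0; lra).
  pose proof (cos_sin_sq phis).
  assert (Harg : 0 <= RR ^ 2 - sin phis ^ 2) by nra.
  pose proof (sqrt_sqrt _ Harg); pose proof (sqrt_pos (RR ^ 2 - sin phis ^ 2)).
  split; nra.
Qed.

(* The origin O_r lies strictly inside the big circle as seen from any of its
   points: the normal at p(x) has positive projection on p(x). *)
Lemma big_circle_support (phis RR : R) (x : phase) :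
  0 < phis < PI / 2 -> 1 <= RR -> side_of x = SR ->
  0 < dot (nrm x) (base phis RR x).
Proof.
  intros Hphi HR Hs; pose proof (dOO_bounds _ _ Hphi HR).
  pose proof (COS_bound (phi x)).
  unfold dot, nrm, base, O_R; rewrite Hs; simpl.
  replace (cos (phi x) * (- dOO phis RR + RR * cos (phi x)) +
           sin (phi x) * (0 + RR * sin (phi x)))
    with (RR * (cos (phi x) ^ 2 + sin (phi x) ^ 2) - dOO phis RR * cos (phi x))
    by ring.
  rewrite cos_sin_sq; nra.
Qed.

Lemma two_bounce_margin (phis RR : R) (x0 x1 x2 : phase) :
  0 < phis < PI / 2 -> 1 <= RR ->
  side_of x0 = Sr -> side_of x1 = SR -> side_of x2 = Sr ->
  Fstep phis RR x0 x1 -> Fstep phis RR x1 x2 ->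
  0 < (tau phis RR x0 x1 - dd RR x0) + (tau phis RR x1 x2 - dd RR x2).
Proof.
  intros Hphi HR H0 H1 H2 H01 H12.
  rewrite (leave_unit_circle _ _ _ _ H0 H01), (arrive_unit_circle _ _ _ _ H2 H12).
  pose proof (reflection_jump _ _ _ _ (base phis RR x1) H01) as Hjump.
  pose proof (big_circle_support _ _ _ Hphi HR H1).
  destruct H01 as (_ & Hx1 & _); pose proof (sin_theta_pos _ _ _ Hx1).
  nra.
Qed.

Theorem mainTheorem7 (phis RR : R) (x x0 x1 x2 : phase) (n0 : nat) :
  0 < phis < PI / 2 -> 1 <= RR ->
  InMr phis RR x ->
  Fiter phis RR n0 x x0 -> InMr_out phis RR x0 ->
  (forall (k : nat) (y : phase), (k < n0)%nat -> Fiter phis RR k x y ->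
     ~ InMr_out phis RR y) ->
  Fstep phis RR x0 x1 ->
  InMR_out phis RR x1 ->
  Fstep phis RR x1 x2 -> side_of x2 = Sr ->
  2 / dd RR x1 < 1 / tau phis RR x0 x1 + 1 / tau phis RR x1 x2 ->
  neg_defocusing phis RR x0 (x1 :: x2 :: nil).
Proof.
  intros Hphi HR _ _ [[Hx0 Hs0] _] _ H01 [[Hx1 Hs1] _] H12 Hs2 Hmirror.
  assert (HR0 : 0 < RR) by lra.
  assert (Hx2 : InM phis RR x2) by (destruct H12 as (_ & H & _); exact H).
  unfold neg_defocusing; simpl; rewrite mmul_id_l, !DF_jac.
  apply jac_product_negative.
  - exact (proj1 (Fstep_flight _ _ _ _ H01)).
  - exact (proj1 (Fstep_flight _ _ _ _ H12)).
  - exact (dd_pos _ _ _ HR0 Hx0).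
  - exact (dd_pos _ _ _ HR0 Hx1).
  - exact (dd_pos _ _ _ HR0 Hx2).
  - exact Hmirror.
  - exact (two_bounce_margin _ _ _ _ _ Hphi HR Hs0 Hs1 Hs2 H01 H12).
Qed.
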